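(* Let $X$ be a Banach space over $\mathbb{K}\in\{\mathbb{R},\mathbb{C}\}$ and $V\subset X$ an $n$-dimensional subspace ($n\ge1$). Let $A\in B(V)$ satisfy $\|A\|_{w,V}>0$, and let $A_0\in B(X,V)$ satisfy $A_0|_V=A$. Put $B_V(X,V)=\{L\in B(X,V): L|_V=0\}$ and $Z_A=\operatorname{span}[A_0]\oplus B_V(X,V)$. Then the numerical radius $\|\cdot\|_w$ (of operators in $Z_A$ regarded as operators $X\to X$) is a norm on $Z_A$, i.e. $\|L\|_w>0$ for every $L\in Z_A\setminus\{0\}$.
   Context: $B(X,V)$ denotes bounded linear operators $X\to V$, $B(V)=B(V,V)$. For $T\in B(X)$ the numerical radius is $\|T\|_w=\sup\{|x^*(Tx)|:x\in S_X,x^*\in S_{X^*},x^*(x)=1\}$. For $A\in B(V)$, $\|A\|_{w,V}=\sup\{|v^*(Av)|: v^*\in B_{V^*},v\in B_V,v^*(v)=1\}$ (the numerical radius computed in $V$). *)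

From Stdlib Require Import Reals.
Open Scope R_scope.
Set Implicit Arguments.

(* Scalars: b = false gives K = R, b = true gives K = C (modelled as R*R). *)
Definition K (b : bool) : Type := if b then (R * R)%type else R.

Definition K0 (b : bool) : K b :=
  match b return K b with true => (0, 0) | false => 0 end.
Definition K1 (b : bool) : K b :=
  match b return K b with true => (1, 0) | false => 1 end.
Definition Kadd {b : bool} : K b -> K b -> K b :=
  match b return K b -> K b -> K b with
  | true => fun x y => (fst x + fst y, snd x + snd y)
  | false => fun x y => x + y
  end.
Definition Kmul {b : bool} : K b -> K b -> K b :=
  match b return K b -> K b -> K b with
  | true => fun x y => (fst x * fst y - snd x * snd y, fst x * snd y + snd x * fst y)
  | false => fun x y => x * y
  end.
Definition Kabs {b : bool} : K b -> R :=
  match b return K b -> R with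
  | true => fun x => sqrt (fst x ^ 2 + snd x ^ 2)
  | false => fun x => Rabs x
  end.

Record banach (b : bool) := Banach {
  vT :> Type;
  vzero : vT;
  vadd : vT -> vT -> vT;
  vopp : vT -> vT;
  vscale : K b -> vT -> vT;
  vnorm : vT -> R;
  vaddA : forall x y z, vadd x (vadd y z) = vadd (vadd x y) z;
  vaddC : forall x y, vadd x y = vadd y x;
  vadd0 : forall x, vadd vzero x = x;
  vaddN : forall x, vadd (vopp x) x = vzero;
  vscaleA : forall a c x, vscale a (vscale c x) = vscale (Kmul a c) x;
  vscale1 : forall x, vscale (K1 b) x = x;
  vscaleDr : forall a x y, vscale a (vadd x y) = vadd (vscale a x) (vscale a y);
  vscaleDl : forall a c x, vscale (Kadd a c) x = vadd (vscale a x) (vscale c x);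
  vnorm_eq0 : forall x, vnorm x = 0 -> x = vzero;
  vnormZ : forall a x, vnorm (vscale a x) = Kabs a * vnorm x;
  vnormD : forall x y, vnorm (vadd x y) <= vnorm x + vnorm y;
  vcomplete : forall u : nat -> vT,
    (forall eps, 0 < eps -> exists N, forall m k, (N <= m)%nat -> (N <= k)%nat ->
        vnorm (vadd (u m) (vopp (u k))) < eps) ->
    exists l, forall eps, 0 < eps -> exists N, forall m, (N <= m)%nat ->
        vnorm (vadd (u m) (vopp l)) < eps
}.

Arguments vzero {b X} : rename.
Arguments vadd {b X} : rename.
Arguments vopp {b X} : rename.
Arguments vscale {b X} : rename.
Arguments vnorm {b X} : rename.

Section Defs.
Context {b : bool} {X : banach b}.

Definition is_subspace (V : X -> Prop) : Prop :=
  V vzero /\ (forall x y, V x -> V y -> V (vadd x y)) /\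
  (forall a x, V x -> V (vscale a x)).

Fixpoint lincomb (c : nat -> K b) (e : nat -> X) (n : nat) : X :=
  match n with
  | O => vzero
  | S m => vadd (lincomb c e m) (vscale (c m) (e m))
  end.

Definition has_dim (V : X -> Prop) (n : nat) : Prop :=
  exists e : nat -> X,
    (forall i, (i < n)%nat -> V (e i)) /\
    (forall c, lincomb c e n = vzero -> forall i, (i < n)%nat -> c i = K0 b) /\
    (forall v, V v -> exists c, v = lincomb c e n).

(* T is linear on V (V = fun _ => True gives global linearity). *)
Definition linear_on {Y : Type} (V : X -> Prop) (addY : Y -> Y -> Y)
  (scaleY : K b -> Y -> Y) (T : X -> Y) : Prop :=
  (forall x y, V x -> V y -> T (vadd x y) = addY (T x) (T y)) /\
  (forall a x, V x -> T (vscale a x) = scaleY a (T x)).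

Definition in_BXV (V : X -> Prop) (T : X -> X) : Prop :=
  linear_on (fun _ => True) vadd vscale T /\
  (exists M, forall x, vnorm (T x) <= M * vnorm x) /\
  (forall x, V (T x)).

(* B(V): bounded linear V -> V (values of A outside V are irrelevant) *)
Definition in_BV (V : X -> Prop) (A : X -> X) : Prop :=
  linear_on V vadd vscale A /\
  (exists M, forall v, V v -> vnorm (A v) <= M * vnorm v) /\
  (forall v, V v -> V (A v)).

Definition in_dual_sphere (f : X -> K b) : Prop :=
  linear_on (fun _ => True) (@Kadd b) (@Kmul b) f /\
  is_lub (fun r => exists x, vnorm x <= 1 /\ r = Kabs (f x)) 1.

Definition is_numrad (T : X -> X) (r : R) : Prop :=
  is_lub (fun s => exists x f, vnorm x = 1 /\ in_dual_sphere f /\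
                     f x = K1 b /\ s = Kabs (f (T x))) r.

(* f is in the closed unit ball B_{V*} of the dual of V (values off V irrelevant):
   linear on V and sup_{v in B_V} |f v| <= 1 *)
Definition in_dualV_ball (V : X -> Prop) (f : X -> K b) : Prop :=
  linear_on V (@Kadd b) (@Kmul b) f /\
  (forall v, V v -> vnorm v <= 1 -> Kabs (f v) <= 1).

Definition is_numradV (V : X -> Prop) (A : X -> X) (r : R) : Prop :=
  is_lub (fun s => exists v f, V v /\ vnorm v <= 1 /\ in_dualV_ball V f /\
                     f v = K1 b /\ s = Kabs (f (A v))) r.

Definition in_ZA (V : X -> Prop) (A0 L : X -> X) : Prop :=
  exists (lam : K b) (T : X -> X),
    in_BXV V T /\ (forall v, V v -> T v = vzero) /\
    (forall x, L x = vadd (vscale lam (A0 x)) (T x)).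

End Defs.

(* Write L = lam A0 + T with T = 0 on V. It suffices to find x with |x| = 1 and a
   norm-one functional F with F x = 1 and F (L x) <> 0. If lam <> 0, take such a
   pair (v, g) for A inside V; Hahn-Banach extends g to X, and L v = lam A v. If
   lam = 0, then L = T has range in V, on which T vanishes, so T^2 = 0; for
   y = x + s T x with s large, T y = T x and a functional norming y cannot vanish
   on T x. Hahn-Banach is proved by Zorn's lemma on graphs of dominated partial
   real extensions, followed by complexification. *)

From Stdlib Require Import Reals Lra Classical ClassicalEpsilon.
From mathcomp Require boolp classical_sets.
Open Scope R_scope.
Set Implicit Arguments.

Definition Kr (b : bool) (r : R) : K b :=
  match b return K b with true => (r, 0) | false => r end.
Definition Kre {b : bool} : K b -> R :=
  match b return K b -> R with true => fun x => fst x | false => fun x => x end.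

Ltac Kcases b := destruct b; cbn [K Kabs K0 K1 Kadd Kmul Kr Kre fst snd] in *;
  repeat match goal with p : (R * R)%type |- _ => destruct p end; cbn [fst snd] in *.

Section Scalars.
Context {b : bool}.
Implicit Types k c : K b.

Lemma Kabs_ge0 k : 0 <= Kabs k.
Proof. Kcases b; [apply sqrt_pos | apply Rabs_pos]. Qed.

Lemma Kabs_K0 : Kabs (K0 b) = 0.
Proof. Kcases b; [replace (0 ^ 2 + 0 ^ 2) with 0 by ring; apply sqrt_0 | apply Rabs_R0]. Qed.

Lemma Kabs_K1 : Kabs (K1 b) = 1.
Proof. Kcases b; [replace (1 ^ 2 + 0 ^ 2) with 1 by ring; apply sqrt_1 | apply Rabs_R1]. Qed.

Lemma Kabs_mul k c : Kabs (Kmul k c) = Kabs k * Kabs c.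
Proof. Kcases b; [rewrite <- sqrt_mult by nra; f_equal; ring | apply Rabs_mult]. Qed.

Lemma Kabs_Kr r : Kabs (Kr b r) = Rabs r.
Proof.
  Kcases b; [|reflexivity].
  rewrite <- sqrt_Rsqr_abs; unfold Rsqr; f_equal; ring.
Qed.

Lemma Kabs_eq0 k : Kabs k = 0 -> k = K0 b.
Proof.
  Kcases b; intro H.
  - apply sqrt_eq_0 in H; [f_equal; nra | nra].
  - destruct (Req_dec k 0) as [|nz]; [assumption|].
    apply Rabs_no_R0 in nz; contradiction.
Qed.

Lemma Kabs_gt0 k : k <> K0 b -> 0 < Kabs k.
Proof.
  intro nz; destruct (Kabs_ge0 k) as [|e]; [assumption|].
  exfalso; apply nz, Kabs_eq0; auto.
Qed.

Lemma Kmul_neq0 k c : k <> K0 b -> c <> K0 b -> Kmul k c <> K0 b.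
Proof.
  intros kn cn e. apply (f_equal Kabs) in e.
  rewrite Kabs_mul, Kabs_K0 in e.
  pose proof (Kabs_gt0 kn); pose proof (Kabs_gt0 cn); nra.
Qed.

Lemma Kre_le_abs k : Kre k <= Kabs k.
Proof.
  Kcases b; [|apply Rle_abs].
  destruct (Rle_dec r 0); [pose proof (sqrt_pos (r ^ 2 + r0 ^ 2)); lra|].
  rewrite <- (sqrt_pow2 r) at 1 by lra.
  apply sqrt_le_1_alt; pose proof (pow2_ge_0 r0); lra.
Qed.

Lemma Kre_add k c : Kre (Kadd k c) = Kre k + Kre c.
Proof. Kcases b; reflexivity. Qed.

Lemma Kre_mul_Kr r k : Kre (Kmul (Kr b r) k) = r * Kre k.
Proof. Kcases b; ring. Qed.

Lemma Kmul_Kr r s : Kmul (Kr b r) (Kr b s) = Kr b (r * s).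
Proof. Kcases b; [f_equal|]; ring. Qed.

Lemma Kadd_Kr r s : Kadd (Kr b r) (Kr b s) = Kr b (r + s).
Proof. Kcases b; [f_equal|]; ring. Qed.

Lemma Kr1 : Kr b 1 = K1 b.
Proof. Kcases b; reflexivity. Qed.

Lemma Kr0 : Kr b 0 = K0 b.
Proof. Kcases b; reflexivity. Qed.

Lemma Kmul0l k : Kmul (K0 b) k = K0 b.
Proof. Kcases b; [f_equal|]; ring. Qed.

Lemma Kmul0r k : Kmul k (K0 b) = K0 b.
Proof. Kcases b; [f_equal|]; ring. Qed.

Lemma Kadd0r k : Kadd k (K0 b) = k.
Proof. Kcases b; [f_equal|]; ring. Qed.

Lemma Kmul1r k : Kmul k (K1 b) = k.
Proof. Kcases b; [f_equal|]; ring. Qed.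

End Scalars.

Section Vectors.
Context {b : bool} {X : banach b}.
Implicit Types x y z : X.

Lemma vadd0r x : vadd x vzero = x.
Proof. rewrite vaddC; apply vadd0. Qed.

Lemma vadd_cancel x y z : vadd x y = vadd x z -> y = z.
Proof.
  intro e.
  rewrite <- (vadd0 X y), <- (vadd0 X z), <- (vaddN X x), <- !vaddA, e.
  reflexivity.
Qed.

Lemma vscale0r (k : K b) : vscale k (@vzero _ X) = vzero.
Proof.
  apply (vadd_cancel (vscale k vzero)).
  rewrite <- vscaleDr, !vadd0r; reflexivity.
Qed.

Lemma vscale0l x : vscale (K0 b) x = vzero.
Proof.
  apply (vadd_cancel (vscale (K0 b) x)).
  rewrite <- vscaleDl, Kadd0r, vadd0r; reflexivity.
Qed.

Lemma vnorm0 : vnorm (@vzero _ X) = 0.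
Proof. rewrite <- (vscale0l vzero), vnormZ, Kabs_K0; ring. Qed.

Definition rscale (r : R) x : X := vscale (Kr b r) x.

Lemma rscaleA r s x : rscale r (rscale s x) = rscale (r * s) x.
Proof. unfold rscale; rewrite vscaleA, Kmul_Kr; reflexivity. Qed.

Lemma rscaleDl r s x : rscale (r + s) x = vadd (rscale r x) (rscale s x).
Proof. unfold rscale; rewrite <- vscaleDl, Kadd_Kr; reflexivity. Qed.

Lemma rscaleDr r x y : rscale r (vadd x y) = vadd (rscale r x) (rscale r y).
Proof. apply vscaleDr. Qed.

Lemma rscale1 x : rscale 1 x = x.
Proof. unfold rscale; rewrite Kr1; apply vscale1. Qed.

Lemma rscale0 x : rscale 0 x = vzero.
Proof. unfold rscale; rewrite Kr0; apply vscale0l. Qed.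

Lemma vnorm_rscale r x : vnorm (rscale r x) = Rabs r * vnorm x.
Proof. unfold rscale; rewrite vnormZ, Kabs_Kr; reflexivity. Qed.

Lemma vnorm_rscale_pos r x : 0 < r -> vnorm (rscale r x) = r * vnorm x.
Proof. intro r0; rewrite vnorm_rscale, Rabs_right by lra; reflexivity. Qed.

Lemma vnorm_ge0 x : 0 <= vnorm x.
Proof.
  pose proof (vnormD X x (rscale (-1) x)) as tri.
  rewrite <- (rscale1 x) in tri at 1.
  rewrite <- rscaleDl in tri; replace (1 + -1) with 0 in tri by ring.
  rewrite rscale0, vnorm0, vnorm_rscale, Rabs_left in tri by lra; lra.
Qed.

Lemma vnorm_gt0 x : x <> vzero -> 0 < vnorm x.
Proof.
  intro nz; destruct (vnorm_ge0 x) as [|e]; [assumption|].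
  exfalso; apply nz, vnorm_eq0; auto.
Qed.

Lemma vadd_swap_mid x y z (t : X) :
  vadd (vadd x y) (vadd z t) = vadd (vadd x z) (vadd y t).
Proof.
  rewrite <- !vaddA; f_equal.
  rewrite !vaddA; f_equal; apply vaddC.
Qed.

(* A reflexive normaliser: a vector equation in x, y, z built from [vadd], [rscale] and
   [vzero] is reduced to three real equations on the coefficients. *)
Inductive vexpr := Ex | Ey | Ez | E0 | Eadd (e1 e2 : vexpr) | Escale (r : R) (e : vexpr).

Fixpoint veval x y z (e : vexpr) : X :=
  match e with
  | Ex => x | Ey => y | Ez => z | E0 => vzero
  | Eadd e1 e2 => vadd (veval x y z e1) (veval x y z e2)
  | Escale r e => rscale r (veval x y z e)
  end.

Fixpoint vcoef (e : vexpr) : R * R * R :=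
  match e with
  | Ex => (1, 0, 0) | Ey => (0, 1, 0) | Ez => (0, 0, 1) | E0 => (0, 0, 0)
  | Eadd e1 e2 =>
      let '(p, q, r) := vcoef e1 in let '(p', q', r') := vcoef e2 in
      (p + p', q + q', r + r')
  | Escale s e => let '(p, q, r) := vcoef e in (s * p, s * q, s * r)
  end.

Definition lincomb3 x y z (c : R * R * R) : X :=
  let '(p, q, r) := c in vadd (rscale p x) (vadd (rscale q y) (rscale r z)).

Lemma veval_lincomb3 x y z e : veval x y z e = lincomb3 x y z (vcoef e).
Proof.
  induction e as [| | | |e1 IH1 e2 IH2|s e IH]; cbn [veval vcoef lincomb3].
  - rewrite rscale1, !rscale0, !vadd0r; reflexivity.
  - rewrite rscale1, !rscale0, vadd0, vadd0r; reflexivity.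
  - rewrite rscale1, !rscale0, !vadd0; reflexivity.
  - rewrite !rscale0, !vadd0; reflexivity.
  - rewrite IH1, IH2.
    destruct (vcoef e1) as [[p q] r], (vcoef e2) as [[p' q'] r']; cbn [lincomb3].
    rewrite !rscaleDl, vadd_swap_mid, (vadd_swap_mid (rscale q y)); reflexivity.
  - rewrite IH.
    destruct (vcoef e) as [[p q] r]; cbn [lincomb3].
    rewrite !rscaleDr, !rscaleA; reflexivity.
Qed.

Lemma lincomb3_ext x y z p q r p' q' r' :
  p = p' -> q = q' -> r = r' -> lincomb3 x y z (p, q, r) = lincomb3 x y z (p', q', r').
Proof. intros -> -> ->; reflexivity. Qed.

End Vectors.

Ltac vreify x y z t :=
  lazymatch t with
  | vadd ?a ?c =>
      let ea := vreify x y z a in let ec := vreify x y z c in constr:(Eadd ea ec)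
  | rscale ?r ?a => let ea := vreify x y z a in constr:(Escale r ea)
  | vzero => constr:(E0)
  | x => constr:(Ex) | y => constr:(Ey) | z => constr:(Ez)
  end.

Ltac vcoefs x y z :=
  lazymatch goal with |- ?l = ?r =>
    let el := vreify x y z l in let er := vreify x y z r in
    change (veval x y z el = veval x y z er);
    rewrite !veval_lincomb3; cbn [vcoef]; apply lincomb3_ext
  end.
Ltac vring x y z := vcoefs x y z; ring.
Ltac vfield x y z := vcoefs x y z; field.

Lemma exists_between (P Q : R -> Prop) :
  (exists p, P p) -> (exists q, Q q) -> (forall p q, P p -> Q q -> p <= q) ->
  exists c, (forall p, P p -> p <= c) /\ (forall q, Q q -> c <= q).
Proof.
  intros [p Pp] [q Qq] PQ.
  destruct (completeness P) as [c [c_ub c_lub]].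
  - exists q; intros p' Pp'; apply PQ; auto.
  - exists p; exact Pp.
  - exists c; split; [exact c_ub|].
    intros q' Qq'; apply c_lub; intros p' Pp'; apply PQ; auto.
Qed.

Lemma is_lub_pos_member (E : R -> Prop) r :
  is_lub E r -> 0 < r -> exists s, E s /\ 0 < s.
Proof.
  intros [_ r_lub] r_pos; apply NNPP; intro none.
  enough (r <= 0) by lra.
  apply r_lub; intros s Es; apply Rnot_lt_le; intro s_pos; eauto.
Qed.

Lemma Zorn_premaximal (T : Type) (R : T -> T -> Prop) (P : T -> Prop) (t0 : T) :
  P t0 -> (forall t, R t t) -> (forall r s t, R r s -> R s t -> R r t) ->
  (forall S, (forall t, S t -> P t) -> classical_sets.total_on S R ->
     exists u, P u /\ forall t, S t -> R t u) ->
  exists m, P m /\ forall t, P t -> R m t -> R t m.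
Proof.
  intros Pt0 R_refl R_trans chain_ub.
  set (Rb := fun s t : {t | P t} => boolp.asbool (R (proj1_sig s) (proj1_sig t))).
  destruct (@classical_sets.ZL_preorder _ (exist P t0 Pt0) Rb) as [[m Pm] m_max].
  - intro t; apply boolp.asboolT, R_refl.
  - intros r s t rs st; apply boolp.asboolT.
    apply (R_trans _ (proj1_sig s)); apply boolp.asboolW; assumption.
  - intros A A_tot.
    destruct (chain_ub (fun t => exists s, A s /\ proj1_sig s = t)) as [u [Pu u_ub]].
    + intros t [[s Ps] [_ <-]]; exact Ps.
    + intros t t' [s [As <-]] [s' [As' <-]].
      destruct (A_tot s s' As As'); [left|right]; apply boolp.asboolW; assumption.
    + exists (exist P u Pu); intros s As; apply boolp.asboolT, u_ub; eauto.
  - exists m; split; [exact Pm|].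
    intros t Pt mt; apply boolp.asboolW, (m_max (exist P t Pt)), boolp.asboolT, mt.
Qed.

Section RealHahnBanach.
Context {b : bool} {X : banach b}.
Variables (W : X -> Prop) (u : X -> R).
Hypothesis W0 : W vzero.
Hypothesis W_add : forall x y, W x -> W y -> W (vadd x y).
Hypothesis W_rscale : forall r x, W x -> W (rscale r x).
Hypothesis u_add : forall x y, W x -> W y -> u (vadd x y) = u x + u y.
Hypothesis u_rscale : forall r x, W x -> u (rscale r x) = r * u x.
Hypothesis u_le : forall x, W x -> u x <= vnorm x.

(* Partial real functionals are handled through their graphs. *)
Definition graph := X -> R -> Prop.

Definition subgraph (G H : graph) : Prop := forall x a, G x a -> H x a.

Record dominated_extension (G : graph) : Prop := {
  de_functional : forall x a a', G x a -> G x a' -> a = a';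
  de_add : forall x a y c, G x a -> G y c -> G (vadd x y) (a + c);
  de_rscale : forall r x a, G x a -> G (rscale r x) (r * a);
  de_le : forall x a, G x a -> a <= vnorm x;
  de_extends : forall w, W w -> G w (u w)
}.

Arguments de_functional {G} _ {x a a'}.
Arguments de_add {G} _ {x a y c}.
Arguments de_rscale {G} _ r {x a}.
Arguments de_le {G} _ {x a}.
Arguments de_extends {G} _ {w}.

Definition seed : graph := fun x a => W x /\ a = u x.

Lemma seed_dominated_extension : dominated_extension seed.
Proof.
  split.
  - intros x a a' [_ ->] [_ ->]; reflexivity.
  - intros x a y c [Wx ->] [Wy ->]; split; [apply W_add | rewrite u_add]; auto.
  - intros r x a [Wx ->]; split; [apply W_rscale | rewrite u_rscale]; auto.
  - intros x a [Wx ->]; apply u_le, Wx.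
  - intros w Ww; split; auto.
Qed.

Lemma seed_subgraph G : dominated_extension G -> subgraph seed G.
Proof. intros dG x a [Wx ->]; apply (de_extends dG), Wx. Qed.

Section ChainUnion.
Variable S : graph -> Prop.
Hypothesis S_de : forall G, S G -> dominated_extension G.
Hypothesis S_chain : classical_sets.total_on S subgraph.

(* The seed is added so that the empty chain is also bounded. *)
Definition chain_member (G : graph) : Prop := G = seed \/ S G.

Definition chain_union : graph := fun x a => exists G, chain_member G /\ G x a.

Lemma chain_member_de G : chain_member G -> dominated_extension G.
Proof. intros [->|SG]; [apply seed_dominated_extension | auto]. Qed.

Lemma chain_union_common x a y c :
  chain_union x a -> chain_union y c -> exists G, chain_member G /\ G x a /\ G y c.
Proof.
  intros [G [mG Ga]] [H [mH Hc]].
  assert (cmp : subgraph G H \/ subgraph H G).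
  { destruct mG as [->|SG], mH as [->|SH].
    - left; intros ? ? h; exact h.
    - left; apply seed_subgraph, S_de, SH.
    - right; apply seed_subgraph, S_de, SG.
    - apply S_chain; assumption. }
  destruct cmp as [GH|HG]; [exists H | exists G]; auto.
Qed.

Lemma chain_union_de : dominated_extension chain_union.
Proof.
  split.
  - intros x a a' h h'.
    destruct (chain_union_common h h') as [G [mG [Ga Ga']]].
    exact (de_functional (chain_member_de mG) Ga Ga').
  - intros x a y c h h'.
    destruct (chain_union_common h h') as [G [mG [Ga Gc]]].
    exists G; split; [|apply (de_add (chain_member_de mG))]; assumption.
  - intros r x a [G [mG Ga]].
    exists G; split; [|apply (de_rscale (chain_member_de mG))]; assumption.
  - intros x a [G [mG Ga]]; exact (de_le (chain_member_de mG) Ga).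
  - intros w Ww; exists seed; split; [left; reflexivity | split; auto].
Qed.

End ChainUnion.

Definition line_extension (m : graph) (x0 : X) (c : R) : graph :=
  fun x a => exists y a' t, m y a' /\ x = vadd y (rscale t x0) /\ a = a' + t * c.

Section LineExtension.
Variables (m : graph) (x0 : X) (c : R).
Hypothesis m_de : dominated_extension m.
Hypothesis x0_notin : ~ (exists a, m x0 a).
Hypothesis c_lower : forall y a, m y a -> a - vnorm (vadd y (rscale (-1) x0)) <= c.
Hypothesis c_upper : forall z a, m z a -> c <= vnorm (vadd z x0) - a.

Lemma line_extension_le y a t : m y a -> a + t * c <= vnorm (vadd y (rscale t x0)).
Proof.
  intro my.
  destruct (Rtotal_order t 0) as [t_neg|[->|t_pos]].
  - pose proof (c_lower (de_rscale m_de (/ - t) my)) as h.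
    replace (vadd (rscale (/ - t) y) (rscale (-1) x0))
      with (rscale (/ - t) (vadd y (rscale t x0))) in h by (vfield y x0 y; lra).
    rewrite vnorm_rscale_pos in h by (apply Rinv_0_lt_compat; lra).
    enough (a - vnorm (vadd y (rscale t x0)) <= - t * c) by lra.
    replace (a - vnorm (vadd y (rscale t x0)))
      with (- t * (/ - t * a - / - t * vnorm (vadd y (rscale t x0)))) by (field; lra).
    apply Rmult_le_compat_l; lra.
  - rewrite Rmult_0_l, Rplus_0_r, rscale0, vadd0r; exact (de_le m_de my).
  - pose proof (c_upper (de_rscale m_de (/ t) my)) as h.
    replace (vadd (rscale (/ t) y) x0)
      with (rscale (/ t) (vadd y (rscale t x0))) in h by (vfield y x0 y; lra).
    rewrite vnorm_rscale_pos in h by (apply Rinv_0_lt_compat; lra).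
    enough (t * c <= vnorm (vadd y (rscale t x0)) - a) by lra.
    replace (vnorm (vadd y (rscale t x0)) - a)
      with (t * (/ t * vnorm (vadd y (rscale t x0)) - / t * a)) by (field; lra).
    apply Rmult_le_compat_l; lra.
Qed.

Lemma line_extension_functional x a a' :
  line_extension m x0 c x a -> line_extension m x0 c x a' -> a = a'.
Proof.
  intros [y [b1 [t [my [-> ->]]]]] [y' [b1' [t' [my' [e ->]]]]].
  assert (ey : y = vadd (vadd y' (rscale t' x0)) (rscale (- t) x0))
    by (rewrite <- e; vring y x0 y).
  destruct (Req_dec t t') as [<-|ne].
  - replace y' with y in my' by (rewrite ey; vring y' x0 y').
    rewrite (de_functional m_de my my'); reflexivity.
  - (* otherwise x0 = (y - y') / (t' - t) would lie in the domain of m *)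
    exfalso; apply x0_notin.
    pose proof (de_rscale m_de (/ (t' - t))
                  (de_add m_de my (de_rscale m_de (-1) my'))) as h.
    replace (rscale (/ (t' - t)) (vadd y (rscale (-1) y'))) with x0 in h
      by (rewrite ey; vfield y' x0 y'; lra).
    eauto.
Qed.

Lemma line_extension_de : dominated_extension (line_extension m x0 c).
Proof.
  split.
  - apply line_extension_functional.
  - intros x a x' a' [y [b1 [t [my [-> ->]]]]] [y' [b1' [t' [my' [-> ->]]]]].
    exists (vadd y y'), (b1 + b1'), (t + t'); split; [apply (de_add m_de); assumption|].
    split; [vring y y' x0 | ring].
  - intros r x a [y [b1 [t [my [-> ->]]]]].
    exists (rscale r y), (r * b1), (r * t); split; [apply (de_rscale m_de), my|].
    split; [vring y x0 y | ring].
  - intros x a [y [b1 [t [my [-> ->]]]]]; apply line_extension_le, my.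
  - intros w Ww; exists w, (u w), 0; split; [apply (de_extends m_de), Ww|].
    split; [vring w x0 w | ring].
Qed.

End LineExtension.

Lemma dominated_extension_step m x0 :
  dominated_extension m -> ~ (exists a, m x0 a) ->
  exists H, dominated_extension H /\ subgraph m H /\ ~ subgraph H m.
Proof.
  intros m_de x0_notin.
  assert (m0 : m vzero 0).
  { pose proof (de_rscale m_de 0 (de_extends m_de W0)) as h.
    rewrite rscale0, Rmult_0_l in h; exact h. }
  destruct (exists_between
              (fun p => exists y a, m y a /\ p = a - vnorm (vadd y (rscale (-1) x0)))
              (fun q => exists z a, m z a /\ q = vnorm (vadd z x0) - a)) as [c [lo hi]].
  - eexists; exists vzero, 0; split; [exact m0 | reflexivity].
  - eexists; exists vzero, 0; split; [exact m0 | reflexivity].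
  - (* a + a' <= |y + z| <= |y - x0| + |z + x0| *)
    intros p q [y [a [my ->]]] [z [a' [mz ->]]].
    pose proof (de_le m_de (de_add m_de my mz)) as h.
    pose proof (vnormD X (vadd y (rscale (-1) x0)) (vadd z x0)) as tri.
    replace (vadd (vadd y (rscale (-1) x0)) (vadd z x0)) with (vadd y z) in tri
      by vring y z x0.
    lra.
  - exists (line_extension m x0 c); split; [|split].
    + apply line_extension_de; eauto.
    + intros x a mx; exists x, a, 0; split; [exact mx|].
      split; [vring x x0 x | ring].
    + intro sub; apply x0_notin; exists c; apply sub.
      exists vzero, 0, 1; split; [exact m0|].
      split; [vring x0 x0 x0 | ring].
Qed.

Theorem real_hahn_banach : exists U : X -> R,
  (forall x y, U (vadd x y) = U x + U y) /\ (forall r x, U (rscale r x) = r * U x) /\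
  (forall x, U x <= vnorm x) /\ (forall w, W w -> U w = u w).
Proof.
  destruct (Zorn_premaximal (R := subgraph) dominated_extension seed seed_dominated_extension)
    as [m [m_de m_max]].
  - intros G x a h; exact h.
  - intros G H K GH HK x a h; auto.
  - intros S S_de S_chain; exists (chain_union S); split.
    + apply chain_union_de; assumption.
    + intros G SG x a Ga; exists G; split; [right|]; assumption.
  - assert (total : forall x, exists a, m x a).
    { intro x0; apply NNPP; intro x0_notin.
      destruct (dominated_extension_step x0 m_de x0_notin) as [H [H_de [mH not_Hm]]].
      apply not_Hm, m_max; assumption. }
    set (U := fun x => proj1_sig (constructive_indefinite_description _ (total x))).
    assert (mU : forall x, m x (U x)) by (intro x; apply proj2_sig).
    exists U; split; [|split; [|split]].
    + intros x y; apply (de_functional m_de (mU _)), (de_add m_de); apply mU.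
    + intros r x; apply (de_functional m_de (mU _)), (de_rscale m_de), mU.
    + intro x; apply (de_le m_de), mU.
    + intros w Ww; apply (de_functional m_de (mU _)), (de_extends m_de), Ww.
Qed.

End RealHahnBanach.

Lemma Kunit_rotate {b} (c : K b) : exists k, Kabs k = 1 /\ Kmul k c = Kr b (Kabs c).
Proof.
  destruct (classic (c = K0 b)) as [->|nz].
  { exists (K1 b); rewrite Kabs_K1, Kmul0r, Kabs_K0, Kr0; auto. }
  pose proof (Kabs_gt0 nz) as n_pos; clear nz.
  Kcases b.
  - set (n := sqrt (r ^ 2 + r0 ^ 2)) in *.
    assert (nn : n * n = r ^ 2 + r0 ^ 2) by (apply sqrt_sqrt; nra).
    exists (r / n, - r0 / n); cbn [fst snd]; split.
    + replace ((r / n) ^ 2 + (- r0 / n) ^ 2) with 1; [apply sqrt_1|].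
      field_simplify_eq; lra.
    + f_equal; field_simplify_eq; lra.
  - exists (Rabs c / c).
    assert (c <> 0) by (intro e; subst; rewrite Rabs_R0 in n_pos; lra).
    split; [|field; assumption].
    unfold Rdiv; rewrite Rabs_mult, Rabs_inv, Rabs_Rabsolu; field.
    apply Rabs_no_R0; assumption.
Qed.

Lemma Kabs_le_of_Kre_le {b} {X : banach b} (F : X -> K b) :
  (forall k x, F (vscale k x) = Kmul k (F x)) -> (forall x, Kre (F x) <= vnorm x) ->
  forall x, Kabs (F x) <= vnorm x.
Proof.
  intros F_scale F_re x.
  destruct (Kunit_rotate (F x)) as [k [k1 kFx]].
  pose proof (F_re (vscale k x)) as h.
  rewrite F_scale, kFx, vnormZ, k1, Rmult_1_l in h.
  replace (Kre (Kr b (Kabs (F x)))) with (Kabs (F x)) in h by (Kcases b; reflexivity).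
  exact h.
Qed.

Lemma vscale_pair {X : banach true} (p q : R) (x : X) :
  vscale ((p, q) : K true) x = vadd (rscale p x) (rscale q (vscale ((0, 1) : K true) x)).
Proof. unfold rscale; rewrite vscaleA, <- vscaleDl; f_equal; cbn; f_equal; ring. Qed.

(* Over C the functional is x |-> U x - i U (i x), whose real part is U. *)
Lemma complexify {b} {X : banach b} (U : X -> R) :
  (forall x y, U (vadd x y) = U x + U y) -> (forall r x, U (rscale r x) = r * U x) ->
  exists F : X -> K b,
    linear_on (fun _ => True) (@Kadd b) (@Kmul b) F /\ forall x, Kre (F x) = U x.
Proof.
  intros U_add U_rscale; destruct b.
  - exists (fun x => (U x, - U (vscale ((0, 1) : K true) x)) : K true).
    split; [split|]; [| |reflexivity].
    + intros x y _ _; rewrite vscaleDr, !U_add; cbn; f_equal; ring.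
    + intros [p q] x _; rewrite vscaleA; cbn [Kmul fst snd].
      replace (0 * p - 1 * q, 0 * q + 1 * p) with (- q, p) by (f_equal; ring).
      rewrite (vscale_pair p q x), (vscale_pair (- q) p x), !U_add, !U_rscale.
      f_equal; ring.
  - exists U; split; [split|]; [auto | intros a x _; apply (U_rscale a x) | reflexivity].
Qed.

Lemma eq_on_of_Kre_eq_on {b} {X : banach b} (W : X -> Prop) (F g : X -> K b) :
  (forall k w, W w -> W (vscale k w)) ->
  (forall k w, W w -> F (vscale k w) = Kmul k (F w)) ->
  (forall k w, W w -> g (vscale k w) = Kmul k (g w)) ->
  (forall w, W w -> Kre (F w) = Kre (g w)) -> forall w, W w -> F w = g w.
Proof.
  intros W_scale F_scale g_scale re_eq w Ww; destruct b.
  - (* the imaginary part of F w is minus the real part of F (i w) *)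
    pose proof (re_eq _ (W_scale ((0, 1) : K true) w Ww)) as h.
    rewrite F_scale, g_scale in h by assumption.
    pose proof (re_eq _ Ww) as h0.
    destruct (F w) as [p q], (g w) as [p' q']; cbn in h, h0; f_equal; lra.
  - apply re_eq, Ww.
Qed.

Theorem hahn_banach {b} {X : banach b} (W : X -> Prop) (g : X -> K b) :
  is_subspace W -> linear_on W (@Kadd b) (@Kmul b) g ->
  (forall w, W w -> Kabs (g w) <= vnorm w) ->
  exists F, linear_on (fun _ => True) (@Kadd b) (@Kmul b) F /\
    (forall x, Kabs (F x) <= vnorm x) /\ (forall w, W w -> F w = g w).
Proof.
  intros [W0 [W_add W_scale]] [g_add g_scale] g_le.
  destruct (real_hahn_banach W (fun x => Kre (g x)) W0 W_add)
    as [U [U_add [U_rscale [U_le U_W]]]].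
  - intros r x Wx; apply W_scale, Wx.
  - intros x y Wx Wy; rewrite g_add by assumption; apply Kre_add.
  - intros r x Wx; unfold rscale; rewrite g_scale by assumption; apply Kre_mul_Kr.
  - intros x Wx; eapply Rle_trans; [apply Kre_le_abs | auto].
  - destruct (complexify U U_add U_rscale) as [F [[F_add F_scale] F_re]].
    assert (F_scale' : forall k x, F (vscale k x) = Kmul k (F x)) by auto.
    exists F; split; [split; assumption | split].
    + apply Kabs_le_of_Kre_le; [assumption|].
      intro x; rewrite F_re; apply U_le.
    + apply (eq_on_of_Kre_eq_on W); auto.
      intros w Ww; rewrite F_re; auto.
Qed.

Lemma Ksub_eq0 {b} (k c : K b) : Kadd k (Kmul (Kr b (-1)) c) = K0 b -> k = c.
Proof. Kcases b; intro e; [injection e; intros; f_equal|]; lra. Qed.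

Lemma Kr_neq0 {b} r : r <> 0 -> Kr b r <> K0 b.
Proof.
  intros r_nz e; apply (f_equal Kabs) in e.
  rewrite Kabs_Kr, Kabs_K0 in e; apply Rabs_no_R0 in r_nz; contradiction.
Qed.

Section Duality.
Context {b : bool} {X : banach b}.

Definition norming_pair (y : X) (F : X -> K b) : Prop :=
  vnorm y = 1 /\ in_dual_sphere F /\ F y = K1 b.

Lemma linear_on_zero (W : X -> Prop) (f : X -> K b) :
  W vzero -> linear_on W (@Kadd b) (@Kmul b) f -> f vzero = K0 b.
Proof.
  intros W0 [_ f_scale].
  rewrite <- (vscale0l vzero), f_scale by assumption; apply Kmul0l.
Qed.

Lemma Kabs_le_of_unit_ball (W : X -> Prop) (f : X -> K b) :
  W vzero -> (forall r x, W x -> W (rscale r x)) -> linear_on W (@Kadd b) (@Kmul b) f ->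
  (forall z, W z -> vnorm z <= 1 -> Kabs (f z) <= 1) ->
  forall z, W z -> Kabs (f z) <= vnorm z.
Proof.
  intros W0 W_rscale f_lin f_ball z Wz.
  destruct (Req_dec (vnorm z) 0) as [e|ne].
  - apply vnorm_eq0 in e; subst z.
    rewrite (linear_on_zero W0 f_lin), Kabs_K0, vnorm0; lra.
  - assert (n_pos : 0 < vnorm z) by (pose proof (vnorm_ge0 z); lra).
    pose proof (f_ball _ (W_rscale (/ vnorm z) z Wz)) as h.
    rewrite vnorm_rscale_pos, Rinv_l in h by (try apply Rinv_0_lt_compat; lra).
    specialize (h (Rle_refl 1)).
    unfold rscale in h; rewrite (proj2 f_lin), Kabs_mul, Kabs_Kr, Rabs_right in h
      by (try left; try apply Rinv_0_lt_compat; assumption).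
    apply (Rmult_le_reg_l (/ vnorm z)); [apply Rinv_0_lt_compat; assumption|].
    rewrite Rinv_l by lra; exact h.
Qed.

Lemma dual_sphere_le (F : X -> K b) : in_dual_sphere F -> forall z, Kabs (F z) <= vnorm z.
Proof.
  intros [F_lin [F_ub _]] z.
  apply (Kabs_le_of_unit_ball (W := fun _ => True));
    [exact I | intros; exact I | exact F_lin | | exact I].
  intros z' _ h; apply F_ub; eauto.
Qed.

Lemma in_dual_sphereI (F : X -> K b) :
  linear_on (fun _ => True) (@Kadd b) (@Kmul b) F -> (forall x, Kabs (F x) <= vnorm x) ->
  (exists x0, vnorm x0 <= 1 /\ Kabs (F x0) = 1) -> in_dual_sphere F.
Proof.
  intros F_lin F_le [x0 [x0_le F_x0]]; split; [exact F_lin | split].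
  - intros s [x [x_le ->]]; eapply Rle_trans; [apply F_le | exact x_le].
  - intros M M_ub; apply M_ub; eauto.
Qed.

Lemma vscale_inj (y : X) (k k' : K b) : vnorm y = 1 -> vscale k y = vscale k' y -> k = k'.
Proof.
  intros y_unit e; apply Ksub_eq0, Kabs_eq0.
  assert (d0 : vscale (Kadd k (Kmul (Kr b (-1)) k')) y = vzero).
  { rewrite vscaleDl, <- vscaleA, e; fold (rscale (-1) (vscale k' y)).
    set (z := vscale k' y); vring z z z. }
  pose proof (vnormZ X (Kadd k (Kmul (Kr b (-1)) k')) y) as h.
  rewrite d0, vnorm0, y_unit in h; lra.
Qed.

Lemma exists_norming_functional (y : X) : vnorm y = 1 -> exists F, norming_pair y F.
Proof.
  intro y_unit.
  set (W := fun z : X => exists k, z = vscale k y).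
  set (g := fun z : X => epsilon (inhabits (K0 b)) (fun k => z = vscale k y)).
  assert (g_coord : forall k, g (vscale k y) = k).
  { intro k; apply (vscale_inj _ _ _ y_unit); symmetry.
    apply (epsilon_spec (inhabits (K0 b)) (fun k0 => vscale k y = vscale k0 y)); eauto. }
  assert (gy : g y = K1 b) by (rewrite <- (vscale1 X y) at 1; apply g_coord).
  destruct (hahn_banach (W := W) (g := g)) as [F [F_lin [F_le F_W]]].
  - split; [|split].
    + exists (K0 b); symmetry; apply vscale0l.
    + intros x z [k ->] [k' ->]; exists (Kadd k k'); symmetry; apply vscaleDl.
    + intros a x [k ->]; exists (Kmul a k); apply vscaleA.
  - split.
    + intros x z [k ->] [k' ->]; rewrite <- vscaleDl, !g_coord; reflexivity.
    + intros a x [k ->]; rewrite vscaleA, !g_coord; reflexivity.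
  - intros w [k ->]; rewrite g_coord, vnormZ, y_unit; lra.
  - assert (Fy : F y = K1 b)
      by (rewrite F_W; [exact gy | exists (K1 b); symmetry; apply vscale1]).
    exists F; split; [exact y_unit | split; [|exact Fy]].
    apply in_dual_sphereI; [exact F_lin | exact F_le |].
    exists y; rewrite Fy, Kabs_K1; lra.
Qed.

Lemma norming_pair_of_dualV_ball (V : X -> Prop) (v : X) (g : X -> K b) :
  is_subspace V -> V v -> vnorm v <= 1 -> in_dualV_ball V g -> g v = K1 b ->
  exists F, norming_pair v F /\ forall w, V w -> F w = g w.
Proof.
  intros [V0 [V_add V_scale]] Vv v_le [g_lin g_ball] gv.
  assert (g_le : forall z, V z -> Kabs (g z) <= vnorm z).
  { apply Kabs_le_of_unit_ball; auto; intros r z Vz; apply V_scale, Vz. }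
  assert (v_unit : vnorm v = 1) by (pose proof (g_le v Vv); rewrite gv, Kabs_K1 in *; lra).
  destruct (hahn_banach (W := V) (g := g)) as [F [F_lin [F_le F_V]]];
    [split; auto | exact g_lin | exact g_le |].
  exists F; split; [|exact F_V].
  split; [exact v_unit | split; [|rewrite F_V; assumption]].
  apply in_dual_sphereI; [exact F_lin | exact F_le |].
  exists v; rewrite F_V, gv, Kabs_K1 by assumption; lra.
Qed.

Lemma numrad_pos (L : X -> X) (M : R) (y : X) (F : X -> K b) :
  (forall x, vnorm (L x) <= M * vnorm x) -> norming_pair y F -> F (L y) <> K0 b ->
  exists r, is_numrad L r /\ 0 < r.
Proof.
  intros L_bd yF FLy.
  set (S := fun s => exists x f, vnorm x = 1 /\ in_dual_sphere f /\
                                 f x = K1 b /\ s = Kabs (f (L x))).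
  assert (S_FLy : S (Kabs (F (L y)))) by (destruct yF as [? [? ?]]; exists y, F; auto).
  destruct (completeness S) as [r [r_ub r_lub]]; [|eauto|].
  - exists M; intros s [x [f [x_unit [f_dual [_ ->]]]]].
    eapply Rle_trans; [apply dual_sphere_le, f_dual|].
    rewrite <- (Rmult_1_r M), <- x_unit; apply L_bd.
  - exists r; split; [exact (conj r_ub r_lub)|].
    apply (Rlt_le_trans _ (Kabs (F (L y)))); [apply Kabs_gt0, FLy | apply r_ub, S_FLy].
Qed.

(* For y = x + s T x with s large, T y = T x and |y| > |x|; a functional norming y
   cannot vanish on T x, since it would then take the same value at y and at x. *)
Lemma norming_pair_of_square_zero (T : X -> X) (x : X) :
  linear_on (fun _ => True) vadd vscale T -> T x <> vzero -> T (T x) = vzero ->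
  exists y F, norming_pair y F /\ F (T y) <> K0 b.
Proof.
  intros [T_add T_scale] Tx_nz TTx.
  set (w := T x) in *.
  pose proof (vnorm_gt0 Tx_nz) as w_pos; pose proof (vnorm_ge0 x) as x_ge0.
  set (s := (2 * vnorm x + 1) / vnorm w).
  assert (s_pos : 0 < s) by (apply Rdiv_lt_0_compat; lra).
  set (y := vadd x (rscale s w)).
  assert (Ty : T y = w).
  { unfold y, rscale; rewrite T_add, T_scale, TTx, vscale0r, vadd0r by auto; reflexivity. }
  assert (y_big : vnorm x + 1 <= vnorm y).
  { pose proof (vnormD X y (rscale (-1) x)) as tri.
    replace (vadd y (rscale (-1) x)) with (rscale s w) in tri by (unfold y; vring x w x).
    rewrite !vnorm_rscale, Rabs_right, Rabs_left in tri by lra.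
    replace (s * vnorm w) with (2 * vnorm x + 1) in tri by (unfold s; field; lra).
    lra. }
  set (y1 := rscale (/ vnorm y) y).
  assert (y1_unit : vnorm y1 = 1).
  { unfold y1; rewrite vnorm_rscale_pos by (apply Rinv_0_lt_compat; lra); field; lra. }
  destruct (exists_norming_functional y1 y1_unit) as [F [_ [F_dual Fy1]]].
  pose proof F_dual as [[F_add F_scale] _].
  assert (Fy : F y = Kr b (vnorm y)).
  { replace y with (rscale (vnorm y) y1) at 1 by (unfold y1; vfield y y y; lra).
    unfold rscale; rewrite F_scale, Fy1 by auto; apply Kmul1r. }
  assert (Fw : F w <> K0 b).
  { intro Fw0.
    unfold y in Fy at 1; unfold rscale in Fy.
    rewrite F_add, F_scale, Fw0, Kmul0r, Kadd0r in Fy by auto.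
    pose proof (dual_sphere_le F_dual x) as h.
    rewrite Fy, Kabs_Kr, Rabs_right in h by lra; lra. }
  exists y1, F; split; [split; [exact y1_unit | split; [exact F_dual | exact Fy1]]|].
  unfold y1, rscale; rewrite T_scale, Ty, F_scale by auto.
  apply Kmul_neq0; [apply Kr_neq0, Rinv_neq_0_compat; lra | exact Fw].
Qed.

End Duality.

Theorem lemma3p1 (b : bool) (X : banach b) (V : X -> Prop) (n : nat)
  (Hn : (1 <= n)%nat) (HV : is_subspace V) (Hdim : has_dim V n)
  (A : X -> X) (HA : in_BV V A) (HAw : exists r, is_numradV V A r /\ 0 < r)
  (A0 : X -> X) (HA0 : in_BXV V A0) (HA0A : forall v, V v -> A0 v = A v) :
  forall L : X -> X, in_ZA V A0 L -> (exists x, L x <> vzero) ->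
    exists r, is_numrad L r /\ 0 < r.
Proof.
  intros L [lam [T [[T_lin [[MT T_bd] T_V]] [T_Vzero L_def]]]] [x Lx].
  destruct HA0 as [_ [[M0 A0_bd] _]].
  assert (L_bd : forall y, vnorm (L y) <= (Kabs lam * M0 + MT) * vnorm y).
  { intro y; rewrite L_def; eapply Rle_trans; [apply vnormD|].
    rewrite vnormZ; pose proof (Kabs_ge0 lam); pose proof (A0_bd y); pose proof (T_bd y).
    nra. }
  destruct (classic (lam = K0 b)) as [->|lam_nz].
  - assert (LT : forall y, L y = T y) by (intro y; rewrite L_def, vscale0l; apply vadd0).
    destruct (norming_pair_of_square_zero x T_lin) as [y [F [yF FTy]]].
    + rewrite <- LT; exact Lx.
    + apply T_Vzero, T_V.
    + apply (numrad_pos L L_bd yF); rewrite LT; exact FTy.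
  - (* on V we have L = lam A, so a point of the numerical range of A in V serves *)
    destruct HAw as [r [r_lub r_pos]].
    destruct (is_lub_pos_member r_lub r_pos)
      as [s [[v [g [Vv [v_le [g_ball [gv ->]]]]]] s_pos]].
    destruct (norming_pair_of_dualV_ball v HV Vv v_le g_ball gv) as [F [vF F_V]].
    apply (numrad_pos L L_bd vF).
    destruct vF as [_ [[[_ F_scale] _] _]]; destruct HA as [_ [_ A_V]].
    rewrite L_def, HA0A, T_Vzero, vadd0r, F_scale, F_V by auto.
    apply Kmul_neq0; [exact lam_nz|].
    intro e; rewrite e, Kabs_K0 in s_pos; lra.
Qed.
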